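(* Suppose Assumption 1 (context) holds. For ARDCA as in the context, every $k\ge0$ (every realization) and every $u\in\mathbb{D}$, $$-\sum_{i=1}^n\sigma_1(u_i,\tilde z_i^k)-\sigma_2(u,v^k)=\langle\triangle(x^*(v^k),ny^k),u\rangle+D(u)+f(x^*(v^k))+\frac1n\phi(ny^k),$$ where $\triangle(x,y)=[(A^Tx-y)^T/n,(Bx+b)^T,g_1(x),\dots,g_m(x)]^T$ for $x\in\mathbb{R}^t,y\in\mathbb{R}^n$, and $\phi(y)=\sum_{i=1}^n\phi_i(y_i)$.
   Context: Data: integers $n,t\ge1$, $p,m\ge0$; $A\in\mathbb{R}^{t\times n}$ (columns $A_j$), $B\in\mathbb{R}^{p\times t}$ (rows $B_{j,:}$), $b\in\mathbb{R}^p$; $f:\mathbb{R}^t\to\mathbb{R}$, $\phi_i:\mathbb{R}\to\mathbb{R}$, $g_i:\mathbb{R}^t\to\mathbb{R}$. Primal problem: minimize $f(x)+\frac1n\sum_i\phi_i(A_i^Tx)$ s.t. $Bx+b=0$, $g_i(x)\le0$. Assumption 1: $f$ $\mu$-strongly convex ($\mu>0$); $\phi_i$ convex and $M$-Lipschitz; $g_i$ convex with subgradients of norm $\le L_{g_i}$; a Slater point $\bar x$ ($g_i(\bar x)<0$, $B\bar x+b=0$) exists; the optimal value is finite. Dual: $\widehat n=n+p+m$, $\mathbb{D}=\{u:u_{n+p+1},\dots,u_{\widehat n}\ge0\}$, $L_f(x,u)=f(x)+\langle u_{1:n},A^Tx/n\rangle+\langle u_{n+1:n+p},Bx+b\rangle+\sum_iu_{n+p+i}g_i(x)$,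 $x^*(u)=\arg\min_xL_f(x,u)$, $d(u)=-L_f(x^*(u),u)$ with $\nabla d(u)=-[(A^Tx^*(u)/n)^T,(Bx^*(u)+b)^T,g(x^*(u))^T]^T$ on $\mathbb{D}$; $h_i=\frac1n\phi_i^*$ ($i\le n$, $\phi_i^*$ the convex conjugate), $h_i\equiv0$ ($n<i\le n+p$), $h_i$ = indicator of $[0,\infty)$ ($i>n+p$); $D(u)=d(u)+\sum_ih_i(u_i)$. $L_j=\|A_j\|^2/(n^2\mu)$ ($j\le n$), $\|B_{j-n,:}\|^2/\mu$ ($n<j\le n+p$), $L_{g_{j-n-p}}^2/\mu$ ($j>n+p$). ARDCA: $\theta_0=1/\widehat n$, $\theta_{k+1}=\frac{\sqrt{\theta_k^4+4\theta_k^2}-\theta_k^2}{2}$; $z^0=u^0\in\mathbb{D}$; for $k\ge0$: $v^k=\theta_kz^k+(1-\theta_k)u^k$; for every $i$, $\tilde z_i^k=\arg\min_{w\in\mathbb{R}}\widehat n\theta_kL_i(w-z_i^k)^2+\nabla_id(v^k)(w-z_i^k)+h_i(w)$; $i_k$ uniform on $\{1,\dots,\widehat n\}$; $z^{k+1}_{i_k}=\tilde z^k_{i_k}$, $z^{k+1}_j=z^k_j$ ($j\ne i_k$); $u^{k+1}=v^k+\widehat n\theta_k(z^{k+1}-z^k)$. Auxiliary quantities: $y_i^k=-2\widehat n\theta_kL_i(\tilde z_i^k-z_i^k)-\nabla_id(v^k)$ for $1\le i\le n$, $y^k=(y^k_1,\dots,y^k_n)$; for $i\le n$, $\sigma_1(u_i,\tilde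 z_i^k)=h_i(\tilde z_i^k)+y_i^k(u_i-\tilde z_i^k)-h_i(u_i)$; $\sigma_2(u,v^k)=d(v^k)+\langle\nabla d(v^k),u-v^k\rangle-d(u)$. *)

From HB Require Import structures.
From mathcomp Require Import all_boot all_order all_algebra.
From mathcomp Require Import all_classical all_reals.
From mathcomp Require Import ereal.
Set Implicit Arguments. Unset Strict Implicit. Unset Printing Implicit Defensive.
Import Order.TTheory GRing.Theory Num.Theory.
Local Open Scope ring_scope.
Local Open Scope classical_set_scope.

(* Dual vectors are functions 'I_(n+p+m) -> R;
   the index set {1..n+p+m} of the paper is 'I_((n+p)+m), split in three
   blocks by blk1 / blk2 / blk3. *)

Section ARDCA.
Variable R : realType.
Variables n t p m : nat.
Variable A : 'M[R]_(t, n).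
Variable B : 'M[R]_(p, t).
Variable b : 'cV[R]_p.
Variable f : 'cV[R]_t -> R.
Variable phi : 'I_n -> R -> R.
Variable g : 'I_m -> 'cV[R]_t -> R.
Variable Lg : 'I_m -> R.
Variable mu : R.

Notation nh := (n + p + m)%N.
Definition blk1 (i : 'I_n) : 'I_nh := lshift m (lshift p i).
Definition blk2 (j : 'I_p) : 'I_nh := lshift m (rshift n j).
Definition blk3 (l : 'I_m) : 'I_nh := rshift (n + p) l.

Definition sqnormc k (v : 'cV[R]_k) : R := \sum_(i < k) v i 0 ^+ 2.
Definition sqnormr k (v : 'rV[R]_k) : R := \sum_(i < k) v 0 i ^+ 2.

(* a point of T minimizing F (chosen by choice; default if none exists) *)
Definition argminR (F : R -> \bar R) : R :=
  xget 0 [set w | forall w', (F w <= F w')%E].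
Definition argminx (F : 'cV[R]_t -> R) : 'cV[R]_t :=
  xget 0 [set x | forall y, F x <= F y].

Definition Lag (x : 'cV[R]_t) (u : 'I_nh -> R) : R :=
  f x + \sum_(i < n) u (blk1 i) * ((A^T *m x) i 0 / n%:R)
      + \sum_(j < p) u (blk2 j) * ((B *m x + b) j 0)
      + \sum_(l < m) u (blk3 l) * g l x.

Definition xstar (u : 'I_nh -> R) : 'cV[R]_t := argminx (fun x => Lag x u).

Definition dual (u : 'I_nh -> R) : R := - Lag (xstar u) u.

(* the gradient of d, given by the explicit formula of the paper *)
Definition gradd (u : 'I_nh -> R) (i : 'I_nh) : R :=
  match fintype.split i with
  | inl i' => match fintype.split i' with
              | inl a => - ((A^T *m xstar u) a 0 / n%:R)
              | inr j => - ((B *m xstar u + b) j 0)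
              end
  | inr l => - g l (xstar u)
  end.

Definition phistar (i : 'I_n) (w : R) : \bar R :=
  ereal_sup [set ((w * y - phi i y)%:E) | y in [set: R]].

Definition hfun (i : 'I_nh) (w : R) : \bar R :=
  match fintype.split i with
  | inl i' => match fintype.split i' with
              | inl a => ((n%:R)^-1)%:E * phistar a w
              | inr _ => 0%E
              end
  | inr _ => if 0 <= w then 0%E else +oo%E
  end.

Definition Dfun (u : 'I_nh -> R) : \bar R :=
  ((dual u)%:E + \sum_(i < nh) hfun i (u i))%E.

Definition Lc (i : 'I_nh) : R :=
  match fintype.split i with
  | inl i' => match fintype.split i' with
              | inl a => sqnormc (col a A) / ((n%:R) ^+ 2 * mu)
              | inr j => sqnormr (row j B) / mu
              end
  | inr l => Lg l ^+ 2 / mu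
  end.

Fixpoint theta (k : nat) : R :=
  match k with
  | 0 => (nh%:R)^-1
  | k'.+1 => (Num.sqrt (theta k' ^+ 4 + 4 * theta k' ^+ 2) - theta k' ^+ 2) / 2
  end.

Definition inD (u : 'I_nh -> R) : Prop := forall l : 'I_m, 0 <= u (blk3 l).

Section Iter.
Variable z0 : 'I_nh -> R.
Variable ik : nat -> 'I_nh.        (* the realization of the random indices *)

Definition vpt k (zu : ('I_nh -> R) * ('I_nh -> R)) : 'I_nh -> R :=
  fun j => theta k * zu.1 j + (1 - theta k) * zu.2 j.

Definition ztil_of k (zu : ('I_nh -> R) * ('I_nh -> R)) (i : 'I_nh) : R :=
  argminR (fun w => ((nh%:R * theta k * Lc i * (w - zu.1 i) ^+ 2
                      + gradd (vpt k zu) i * (w - zu.1 i))%:E + hfun i w)%E).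

Definition step k (zu : ('I_nh -> R) * ('I_nh -> R)) :=
  let z' := fun j => if j == ik k then ztil_of k zu j else zu.1 j in
  (z', fun j => vpt k zu j + nh%:R * theta k * (z' j - zu.1 j)).

Fixpoint state (k : nat) : ('I_nh -> R) * ('I_nh -> R) :=
  match k with
  | 0 => (z0, z0)
  | k'.+1 => step k' (state k')
  end.

Definition zk k := (state k).1.
Definition uk k := (state k).2.
Definition vk k := vpt k (state k).
Definition ztil k := ztil_of k (state k).

Definition yk k (i : 'I_n) : R :=
  - (2 * nh%:R * theta k * Lc (blk1 i) * (ztil k (blk1 i) - zk k (blk1 i)))
  - gradd (vk k) (blk1 i).

Definition sigma1 k (i : 'I_n) (ui : R) : \bar R :=
  (hfun (blk1 i) (ztil k (blk1 i)) + (yk k i * (ui - ztil k (blk1 i)))%:E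
   - hfun (blk1 i) ui)%E.

Definition sigma2 k (u : 'I_nh -> R) : R :=
  dual (vk k) + \sum_(i < nh) gradd (vk k) i * (u i - vk k i) - dual u.
End Iter.

Definition tri (x : 'cV[R]_t) (y : 'I_n -> R) (i : 'I_nh) : R :=
  match fintype.split i with
  | inl i' => match fintype.split i' with
              | inl a => ((A^T *m x) a 0 - y a) / n%:R
              | inr j => (B *m x + b) j 0
              end
  | inr l => g l x
  end.

Definition phisum (y : 'I_n -> R) : R := \sum_(i < n) phi i (y i).

Definition inprod k (s v : 'cV[R]_k) : R := \sum_(i < k) s i 0 * v i 0.

Definition strongly_convex (F : 'cV[R]_t -> R) (c : R) : Prop :=
  forall x y (l : R), 0 <= l <= 1 ->
    F (l *: x + (1 - l) *: y) <=
      l * F x + (1 - l) * F y - c / 2 * l * (1 - l) * sqnormc (x - y).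

Definition convexR (F : R -> R) : Prop :=
  forall x y (l : R), 0 <= l <= 1 ->
    F (l * x + (1 - l) * y) <= l * F x + (1 - l) * F y.

Definition convexV (F : 'cV[R]_t -> R) : Prop :=
  forall x y (l : R), 0 <= l <= 1 ->
    F (l *: x + (1 - l) *: y) <= l * F x + (1 - l) * F y.

Definition subgrad (F : 'cV[R]_t -> R) (x s : 'cV[R]_t) : Prop :=
  forall y, F x + inprod s (y - x) <= F y.

Definition primal_obj (x : 'cV[R]_t) : R :=
  f x + (n%:R)^-1 * \sum_(i < n) phi i ((A^T *m x) i 0).

Definition feasible (x : 'cV[R]_t) : Prop :=
  B *m x + b = 0 /\ forall l, g l x <= 0.

Definition assumption1 (M : R) : Prop :=
  0 < mu /\ strongly_convex f mu /\
  (forall i, convexR (phi i)) /\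
  (forall i a c, `|phi i a - phi i c| <= M * `|a - c|) /\
  (forall l, convexV (g l)) /\
  (forall l x s, subgrad (g l) x s -> Num.sqrt (sqnormc s) <= Lg l) /\
  (exists xb, B *m xb + b = 0 /\ forall l, g l xb < 0) /\
  (exists c, forall x, feasible x -> c <= primal_obj x).

End ARDCA.

From HB Require Import structures.
From mathcomp Require Import all_boot all_order all_algebra.
From mathcomp Require Import all_classical all_reals.
From mathcomp Require Import ereal.
From mathcomp Require Import all_analysis.
From mathcomp Require Import ring lra.
Import Order.TTheory GRing.Theory Num.Theory.
Import numFieldNormedType.Exports.
Set Implicit Arguments. Unset Strict Implicit.
Local Open Scope ring_scope.
Local Open Scope classical_set_scope.

(* For i <= n, z~_i^k minimizes a convex quadratic plus phi_i^* / n, and y_i^k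
   is the subgradient of phi_i^* / n at z~_i^k supplied by the optimality
   condition; so Fenchel-Young is an equality there,
   h_i(z~_i^k) = (z~_i^k (n y_i^k) - phi_i(n y_i^k)) / n, and sigma_1 is affine
   in u_i.  As L_f(x, u) is affine in u, sigma_2(u, v^k) = - L_f(x^*(v^k), u) - d(u),
   and the identity follows by expanding L_f along the three blocks of u.
   Biconjugation is avoided by building a minimizer of the prox objective from
   the primal side: at a minimizer s of phi_i plus a convex quadratic, the
   first-order condition gives a subgradient w of phi_i at s, hence
   phi_i^*(w) = w s - phi_i(s), and this w minimizes the prox objective. *)

Section ConvexConjugate.
Variable R : realType.
Implicit Types (F : R -> R) (w s y : R).

Definition conjugate F w : \bar R :=
  ereal_sup [set (w * y - F y)%:E | y in [set: R]].

Lemma conjugate_ge F w y : ((w * y - F y)%:E <= conjugate F w)%E.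
Proof. by apply: ereal_sup_ubound; exists y. Qed.

Lemma conjugate_neqNy F w : conjugate F w != -oo%E.
Proof. by have := conjugate_ge F w 0; case: (conjugate F w). Qed.

Lemma conjugate_subgradient F w s :
  (forall y, F s + w * (y - s) <= F y) -> conjugate F w = (w * s - F s)%:E.
Proof.
move=> sub_w; apply/le_anti; rewrite conjugate_ge andbT.
by apply: ge_ereal_sup => _ [y _ <-]; rewrite lee_fin; have := sub_w y; lra.
Qed.

End ConvexConjugate.

Section ConvexReal.
Variables (R : realType) (F : R -> R).
Hypothesis F_convex : convexR F.

Lemma convexR_slope u s y :
  u < s -> s < y -> (F s - F u) * (y - s) <= (F y - F s) * (s - u).
Proof.
move=> us sy; have yu : 0 < y - u by lra.
set l := (y - s) / (y - u).
have l01 : 0 <= l <= 1.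
  by rewrite divr_ge0 ?ler_pdivrMr //= ?mul1r; lra.
have := F_convex u y l01.
have -> : l * u + (1 - l) * y = s by rewrite /l; field; rewrite gt_eqF.
have -> : l * F u + (1 - l) * F y = ((y - s) * F u + (s - u) * F y) / (y - u).
  by rewrite /l; field; rewrite gt_eqF.
rewrite ler_pdivlMr //; lra.
Qed.

Lemma convexR_subgradient s : exists w, forall y, F s + w * (y - s) <= F y.
Proof.
pose S := [set (F s - F u) / (s - u) | u in [set u | u < s]].
have S_ub y : s < y -> ubound S ((F y - F s) / (y - s)).
  move=> sy _ [u /= us <-].
  rewrite ler_pdivrMr ?subr_gt0 // mulrAC ler_pdivlMr ?subr_gt0 //.
  exact: convexR_slope.
have S_sup : has_sup S.
  split; first by exists ((F s - F (s - 1)) / (s - (s - 1))), (s - 1) => //=; lra.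
  by exists ((F (s + 1) - F s) / (s + 1 - s)); apply: S_ub; lra.
exists (sup S) => y; have [ys|sy|->] := ltgtP y s; last by rewrite subrr mulr0 addr0.
- have : (F s - F y) / (s - y) <= sup S by apply: ub_le_sup S_sup.2 _ _; exists y.
  rewrite ler_pdivrMr ?subr_gt0 //; nra.
- have : sup S <= (F y - F s) / (y - s) by apply: ge_sup S_sup.1 _; apply: S_ub.
  rewrite ler_pdivlMr ?subr_gt0 //; nra.
Qed.

Lemma convexR_quad_min_subgradient c beta s :
  0 <= c ->
  (forall y, F s + c * s ^+ 2 - beta * s <= F y + c * y ^+ 2 - beta * y) ->
  forall y, F s + (beta - 2 * c * s) * (y - s) <= F y.
Proof.
move=> c_ge0 s_min y; apply/ler_addgt0Pr => e e_gt0.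
set d := y - s; set K := c * d ^+ 2.
have K_ge0 : 0 <= K by rewrite mulr_ge0 // sqr_ge0.
set l := e / (e + K + 1).
have l_gt0 : 0 < l by rewrite divr_gt0 //; lra.
have l_le1 : l <= 1 by rewrite ler_pdivrMr ?mul1r; lra.
have lK_le : l * K <= e by rewrite mulrAC ler_pdivrMr; nra.
(* Comparing [s] with [s + l (y - s)] bounds [F y - F s] below by
   [(beta - 2 c s) (y - s) - l c (y - s) ^+ 2], and [l] can be taken small. *)
have := s_min (l * y + (1 - l) * s).
have := F_convex y s (l:=l); rewrite (ltW l_gt0) l_le1 => /(_ isT).
have -> : l * y + (1 - l) * s = s + l * d by rewrite /d; ring.
move=> conv min.
have : 0 <= l * (F y - F s - (beta - 2 * c * s) * d + l * K) by rewrite /K; nra.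
rewrite pmulr_rge0 //; lra.
Qed.

End ConvexReal.

Section LipschitzReal.
Variables (R : realType) (F : R -> R) (M : R).
Hypothesis F_lipschitz : forall a c, `|F a - F c| <= M * `|a - c|.

Lemma lipschitzR_continuous : continuous F.
Proof.
move=> x; apply/cvgrPdist_le => e e_gt0.
have M1_gt0 : 0 < `|M| + 1 by rewrite ltr_wpDl.
apply/nbhs_ballP; exists (e / (`|M| + 1)) => /=; first by rewrite divr_gt0.
move=> y; rewrite /ball_ /= ltr_pdivlMr // => xy.
apply: le_trans (F_lipschitz x y) _.
apply: le_trans (ler_wpM2r (normr_ge0 _) (ler_norm M)) _.
have := normr_ge0 M; have := normr_ge0 (x - y); nra.
Qed.

(* A quadratic with positive leading coefficient dominates the at most linear growth of [F]. *)
Lemma lipschitzR_quad_min c beta : 0 < c ->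
  exists s, forall y, F s + c * s ^+ 2 - beta * s <= F y + c * y ^+ 2 - beta * y.
Proof.
move=> c_gt0; pose G y := F y + c * y ^+ 2 - beta * y.
have G_cont : continuous G.
  move=> x; apply: cvgB; first apply: cvgD.
  - exact: lipschitzR_continuous.
  - by apply: cvgM; [exact: cvg_cst | rewrite expr2; apply: cvgM; exact: cvg_id].
  - by apply: cvgM; [exact: cvg_cst | exact: cvg_id].
pose K := (`|M| + `|beta|) / c.
have K_ge0 : 0 <= K by rewrite divr_ge0 ?addr_ge0 // ltW.
have [s _ s_min] : exists2 s, s \in `[- K, K]%R & forall y, y \in `[- K, K]%R -> G s <= G y.
  apply: EVT_min; first by rewrite lerNl; lra.
  exact: continuous_subspaceT.
have G0 : G s <= G 0 by apply: s_min; rewrite in_itv /=; lra.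
exists s => y; rewrite -/(G s) -/(G y).
have [yK|Ky] := leP `|y| K; first by apply: s_min; rewrite in_itv /= -ler_norml.
apply: le_trans G0 _; rewrite /G expr0n /= !mulr0 addr0 subr0.
have F_lb : F 0 - `|M| * `|y| <= F y.
  have := F_lipschitz y 0; rewrite subr0 => Fy0.
  have := ler_wpM2r (normr_ge0 y) (ler_norm M).
  have := ler_norm (F 0 - F y); rewrite distrC; lra.
have by_le : beta * y <= `|beta| * `|y| by rewrite -normrM ler_norm.
have y2 : y ^+ 2 = `|y| ^+ 2 by rewrite real_normK // num_real.
have Mb_lt : `|M| + `|beta| < c * `|y| by rewrite /K ltr_pdivrMr // mulrC in Ky.
rewrite y2; have := normr_ge0 y; have := normr_ge0 M; have := normr_ge0 beta; nra.
Qed.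

End LipschitzReal.

Section ProxConjugate.
Variables (R : realType) (F : R -> R) (M nn a z c : R).
Hypotheses (F_convex : convexR F)
  (F_lipschitz : forall x y, `|F x - F y| <= M * `|x - y|).
Hypotheses (nn_gt0 : 0 < nn) (a_ge0 : 0 <= a).

Let quad w := a * (w - z) ^+ 2 + c * (w - z).
Let prox_obj w : \bar R := ((quad w)%:E + (nn^-1)%:E * conjugate F w)%E.
(* [- nn] times the derivative of [quad]: a minimizer [w] of [prox_obj] makes
   [dual_pt w] a subgradient of [conjugate F] at [w]. *)
Let dual_pt w := nn * (- (2 * a * (w - z)) - c).
Let is_subgradient w s := forall y, F s + w * (y - s) <= F y.

Lemma exists_subgradient_at_dual_pt : exists w, is_subgradient w (dual_pt w).
Proof.
have nn_neq0 : nn != 0 by rewrite gt_eqF.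
rewrite /is_subgradient /dual_pt.
have [->|a_neq0] := eqVneq a 0.
  have [w sub_w] := convexR_subgradient F_convex (- (nn * c)).
  exists w; rewrite (_ : nn * _ = - (nn * c)) //; ring.
(* [dual_pt w = s] means [w = z - c / (2 a) - s / (2 nn a)], which is a
   subgradient at [s] by the first-order condition when [s] minimizes
   [F s + s ^+ 2 / (4 nn a) - (z - c / (2 a)) s]. *)
have a_gt0 : 0 < a by rewrite lt0r a_neq0.
have C_gt0 : 0 < (4 * nn * a)^-1 by rewrite invr_gt0 !mulr_gt0.
have [s s_min] := lipschitzR_quad_min F_lipschitz (z - c / (2 * a)) C_gt0.
exists (z - c / (2 * a) - 2 * (4 * nn * a)^-1 * s).
have -> : nn * (- (2 * a * (z - c / (2 * a) - 2 * (4 * nn * a)^-1 * s - z)) - c) = s.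
  by field; rewrite nn_neq0 a_neq0.
exact: (convexR_quad_min_subgradient F_convex (ltW C_gt0) s_min).
Qed.

Let prox_val w := quad w + (w * dual_pt w - F (dual_pt w)) / nn.

Lemma prox_obj_subgradientE w :
  is_subgradient w (dual_pt w) -> prox_obj w = (prox_val w)%:E.
Proof.
by move=> sub_w; rewrite /prox_obj (conjugate_subgradient sub_w) -EFinM -EFinD mulrC.
Qed.

(* Fenchel-Young at [dual_pt w] bounds [prox_obj] below by a parabola with vertex at [w]. *)
Lemma prox_obj_ge w v : ((prox_val w + a * (v - w) ^+ 2)%:E <= prox_obj v)%E.
Proof.
apply: (@le_trans _ _ ((quad v)%:E + (nn^-1)%:E * (v * dual_pt w - F (dual_pt w))%:E)%E).
  rewrite -EFinM -EFinD lee_fin le_eqVlt; apply/orP; left; apply/eqP.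
  by rewrite /prox_val /quad /dual_pt; field; rewrite gt_eqF.
rewrite leeD2l // lee_wpmul2l ?conjugate_ge //.
by rewrite lee_fin invr_ge0 ltW.
Qed.

Lemma prox_min_fenchel_young w' : (forall v, (prox_obj w' <= prox_obj v)%E) ->
  ((nn^-1)%:E * conjugate F w' = ((w' * dual_pt w' - F (dual_pt w')) / nn)%:E)%E.
Proof.
move=> w'_min; have [w sub_w] := exists_subgradient_at_dual_pt.
set s := dual_pt w.
have w'_le := w'_min w; rewrite (prox_obj_subgradientE sub_w) in w'_le.
have w'_ge := prox_obj_ge w w'.
have [r conjE] : exists r, conjugate F w' = r%:E.
  move: w'_le (conjugate_neqNy F w'); rewrite /prox_obj.
  case: (conjugate F w') => [r _ _| |//]; first by exists r.
  by rewrite gt0_muley ?lte_fin ?invr_gt0.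
move: w'_le w'_ge; rewrite /prox_obj conjE -EFinM -EFinD !lee_fin => w'_le w'_ge.
have r_ge : (w' * s - F s) / nn <= r / nn.
  by rewrite ler_pM2r ?invr_gt0 //; have := conjugate_ge F w' s; rewrite conjE lee_fin.
have w'_id : quad w' + (w' * s - F s) / nn = prox_val w + a * (w' - w) ^+ 2.
  by rewrite /prox_val /quad /s /dual_pt; field; rewrite gt_eqF.
have a_d2 : a * (w' - w) ^+ 2 = 0.
  by apply/le_anti; rewrite mulr_ge0 ?sqr_ge0 // andbT; lra.
have -> : dual_pt w' = s.
  apply/eqP; rewrite -subr_eq0 (_ : _ - _ = - 2 * nn * (a * (w' - w))); last first.
    by rewrite /s /dual_pt; ring.
  by move: a_d2 => /eqP; rewrite mulf_eq0 sqrf_eq0 subr_eq0 => /orP[]/eqP->; rewrite ?mul0r ?subrr ?mulr0.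
congr _%:E; rewrite mulrC; lra.
Qed.

Lemma argminR_prox_fenchel_young (w := argminR (fun w =>
    ((a * (w - z) ^+ 2 + c * (w - z))%:E + (nn^-1)%:E * conjugate F w)%E)) :
  ((nn^-1)%:E * conjugate F w =
   ((w * (nn * (- (2 * a * (w - z)) - c)) - F (nn * (- (2 * a * (w - z)) - c))) / nn)%:E)%E.
Proof.
apply: prox_min_fenchel_young.
apply: (xgetPex 0 (P := [set w | forall v, (prox_obj w <= prox_obj v)%E])).
have [w0 sub_w0] := exists_subgradient_at_dual_pt.
exists w0 => v; rewrite prox_obj_subgradientE //; apply: le_trans (prox_obj_ge w0 v).
by rewrite lee_fin lerDl mulr_ge0 ?sqr_ge0.
Qed.

End ProxConjugate.

Lemma oppe_sum_EFinB (R : numDomainType) (I : Type) (r : seq I) (a : I -> R) (e : I -> \bar R) :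
  (forall i, e i != -oo%E) ->
  (- \sum_(i <- r) ((a i)%:E - e i) = (- \sum_(i <- r) a i)%:E + \sum_(i <- r) e i)%E.
Proof.
move=> e_neqNy; rewrite big_split /= sumEFin sumeN; last first.
  by move=> i j _ _; move: (e_neqNy i) (e_neqNy j); case: (e i); case: (e j).
by rewrite oppeD // oppeK.
Qed.

Lemma split_lshift m n (i : 'I_m) : fintype.split (lshift n i) = inl i.
Proof. exact: (unsplitK (inl i)). Qed.

Lemma split_rshift m n (j : 'I_n) : fintype.split (rshift m j) = inr j.
Proof. exact: (unsplitK (inr j)). Qed.

Lemma sum_blocks (V : nmodType) n p m (F : 'I_(n + p + m) -> V) :
  \sum_(i < n + p + m) F i =
  \sum_(a < n) F (blk1 p m a) + \sum_(j < p) F (blk2 n m j) + \sum_(l < m) F (blk3 n p l).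
Proof. by rewrite !big_split_ord. Qed.

Lemma theta_ge0 (R : realType) n p m k : 0 <= theta R n p m k.
Proof.
elim: k => [|k IH] /=; first by rewrite invr_ge0.
set th := theta R n p m k; rewrite divr_ge0 // subr_ge0.
rewrite -[th ^+ 2]ger0_norm ?sqr_ge0 // -sqrtr_sqr -exprM.
by rewrite ler_wsqrtr // lerDl mulr_ge0 ?sqr_ge0.
Qed.

Section ARDCA.
Variables (R : realType) (n t p m : nat).
Variables (A : 'M[R]_(t, n)) (B : 'M[R]_(p, t)) (b : 'cV[R]_p).
Variables (f : 'cV[R]_t -> R) (phi : 'I_n -> R -> R) (g : 'I_m -> 'cV[R]_t -> R).
Variables (Lg : 'I_m -> R) (mu M : R) (z0 : 'I_(n + p + m) -> R) (ik : nat -> 'I_(n + p + m)).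

Local Notation blk1 := (blk1 p m).
Local Notation Lag := (Lag A B b f g).
Local Notation xstar := (xstar A B b f g).
Local Notation dual := (dual A B b f g).
Local Notation gradd := (gradd A B b f g).
Local Notation tri := (tri A B b g).
Local Notation hfun := (@hfun R n p m phi).
Local Notation vk := (vk A B b f phi g Lg mu z0 ik).
Local Notation yk := (yk A B b f phi g Lg mu z0 ik).
Local Notation zk := (zk A B b f phi g Lg mu z0 ik).
Local Notation ztil := (ztil A B b f phi g Lg mu z0 ik).

Lemma Lag_tri x y u : Lag x u =
  f x + \sum_(i < n + p + m) tri x y i * u i + \sum_(a < n) y a / n%:R * u (blk1 a).
Proof.
rewrite sum_blocks /Lag.
have E1 : \sum_(a < n) tri x y (blk1 a) * u (blk1 a) + \sum_(a < n) y a / n%:R * u (blk1 a)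
    = \sum_(a < n) u (blk1 a) * ((A^T *m x) a 0 / n%:R).
  by rewrite -big_split; apply: eq_bigr => a _; rewrite /= /tri /blk1 !split_lshift; ring.
have E2 : \sum_(j < p) tri x y (blk2 n m j) * u (blk2 n m j)
    = \sum_(j < p) u (blk2 n m j) * (B *m x + b) j 0.
  by apply: eq_bigr => j _; rewrite /tri /blk2 split_lshift split_rshift mulrC.
have E3 : \sum_(l < m) tri x y (blk3 n p l) * u (blk3 n p l)
    = \sum_(l < m) u (blk3 n p l) * g l x.
  by apply: eq_bigr => l _; rewrite /tri /blk3 split_rshift mulrC.
by rewrite E2 E3 -E1; ring.
Qed.

Lemma Lag_tri0 x u : Lag x u = f x + \sum_(i < n + p + m) tri x (fun=> 0) i * u i.
Proof. by rewrite (Lag_tri x (fun=> 0)) [X in _ + X]big1 ?addr0 // => a _; rewrite !mul0r. Qed.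

Lemma gradd_tri v i : gradd v i = - tri (xstar v) (fun=> 0) i.
Proof.
rewrite /gradd /tri; case: fintype.split => [i'|//].
by case: fintype.split => [a|//]; rewrite subr0.
Qed.

Lemma sigma2E k u :
  sigma2 A B b f phi g Lg mu z0 ik k u = - Lag (xstar (vk k)) u - dual u.
Proof.
rewrite /sigma2 -/(vk k).
have -> : dual (vk k) = - Lag (xstar (vk k)) (vk k) by [].
set x := xstar (vk k).
have -> : \sum_(i < n + p + m) gradd (vk k) i * (u i - vk k i) =
    \sum_i tri x (fun=> 0) i * vk k i - \sum_i tri x (fun=> 0) i * u i.
  by rewrite -sumrB; apply: eq_bigr => i _; rewrite gradd_tri; ring.
by rewrite !Lag_tri0; ring.
Qed.

Lemma hfun_blk1 a w : hfun (blk1 a) w = (((n%:R)^-1)%:E * conjugate (phi a) w)%E.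
Proof. by rewrite /hfun /blk1 !split_lshift. Qed.

Lemma hfun_blk1_neqNy a w : hfun (blk1 a) w != -oo%E.
Proof.
have n_gt0 : (0 < n)%N by apply: leq_ltn_trans (ltn_ord a).
rewrite hfun_blk1; move: (conjugate_neqNy (phi a) w).
by case: conjugate => // _; rewrite gt0_muley ?lte_fin ?invr_gt0 ?ltr0n.
Qed.

Lemma DfunE u : inD u ->
  Dfun A B b f phi g u = ((dual u)%:E + \sum_(a < n) hfun (blk1 a) (u (blk1 a)))%E.
Proof.
move=> u_inD; rewrite /Dfun sum_blocks.
rewrite [X in (_ + X + _)%E]big1 => [|j _]; last by rewrite /hfun /blk2 split_lshift split_rshift.
rewrite [X in (_ + _ + X)%E]big1 => [|l _]; last by rewrite /hfun /blk3 split_rshift u_inD.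
by rewrite !adde0.
Qed.

Hypotheses (mu_ge0 : 0 <= mu) (phi_convex : forall a, convexR (phi a))
  (phi_lipschitz : forall a x y, `|phi a x - phi a y| <= M * `|x - y|).

Lemma hfun_ztil k a : hfun (blk1 a) (ztil k (blk1 a)) =
  ((ztil k (blk1 a) * (n%:R * yk k a) - phi a (n%:R * yk k a)) / n%:R)%:E.
Proof.
have n_gt0 : 0 < n%:R :> R by rewrite ltr0n; apply: leq_ltn_trans (ltn_ord a).
set q := (n + p + m)%:R * theta R n p m k * Lc A B Lg mu (blk1 a).
have q_ge0 : 0 <= q.
  rewrite !mulr_ge0 ?theta_ge0 // /Lc /blk1 !split_lshift divr_ge0 ?mulr_ge0 ?sqr_ge0 //.
  by rewrite sumr_ge0 // => i _; rewrite sqr_ge0.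
set z := zk k (blk1 a); set c := gradd (vk k) (blk1 a).
have ztilE : ztil k (blk1 a) = argminR (fun w =>
    ((q * (w - z) ^+ 2 + c * (w - z))%:E + ((n%:R)^-1)%:E * conjugate (phi a) w)%E).
  by rewrite /ztil /ztil_of; congr argminR; apply/funext => w; rewrite hfun_blk1.
have -> : yk k a = - (2 * q * (ztil k (blk1 a) - z)) - c by rewrite /yk /q /z /c; ring.
rewrite hfun_blk1 ztilE; exact: argminR_prox_fenchel_young.
Qed.

Lemma sigma1E k a w : sigma1 A B b f phi g Lg mu z0 ik k a w =
  ((yk k a * w - (n%:R)^-1 * phi a (n%:R * yk k a))%:E - hfun (blk1 a) w)%E.
Proof.
have n_neq0 : n%:R != 0 :> R by rewrite pnatr_eq0 -lt0n; apply: leq_ltn_trans (ltn_ord a).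
by rewrite /sigma1 hfun_ztil -EFinD; congr (_%:E - _)%E; field.
Qed.

End ARDCA.

Unset Implicit Arguments.
Theorem lemma4 (R : realType) (n t p m : nat)
  (A : 'M[R]_(t, n)) (B : 'M[R]_(p, t)) (b : 'cV[R]_p)
  (f : 'cV[R]_t -> R) (phi : 'I_n -> R -> R) (g : 'I_m -> 'cV[R]_t -> R)
  (Lg : 'I_m -> R) (mu M : R) :
  (0 < n)%N -> (0 < t)%N ->
  assumption1 A B b f phi g Lg mu M ->
  forall (z0 : 'I_(n + p + m) -> R) (ik : nat -> 'I_(n + p + m)),
  inD z0 ->
  forall (k : nat) (u : 'I_(n + p + m) -> R), inD u ->
  let x := xstar A B b f g (vk A B b f phi g Lg mu z0 ik k) in
  let y := yk A B b f phi g Lg mu z0 ik k in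
  (- (\sum_(i < n) sigma1 A B b f phi g Lg mu z0 ik k i (u (blk1 p m i)))
   - (sigma2 A B b f phi g Lg mu z0 ik k u)%:E
   = (\sum_(i < n + p + m) tri A B b g x (fun j => n%:R * y j) i * u i)%:E
     + Dfun A B b f phi g u + (f x)%:E
     + ((n%:R)^-1 * phisum phi (fun j => n%:R * y j))%:E)%E.
Proof.
move=> n_gt0 _ [/ltW mu_ge0 [_ [phi_convex [phi_lipschitz _]]]] z0 ik _ k u u_inD x y.
have sigma1_kE := sigma1E A B b f g Lg z0 ik mu_ge0 phi_convex phi_lipschitz k.
rewrite (eq_bigr _ (fun a _ => sigma1_kE a _)).
rewrite oppe_sum_EFinB => [|a]; last exact: hfun_blk1_neqNy.
rewrite DfunE // sigma2E -/x (Lag_tri A B b f g x (fun a => n%:R * y a)).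
(* The sum of the [h_i (u_i)] may be [+oo]: isolate it on both sides. *)
rewrite -/y addeAC -EFinB [in RHS]addeA -[in RHS]EFinD [X in (_ = X + _)%E]addeAC [RHS]addeAC.
rewrite -!EFinD; congr (_%:E + _)%E.
have n_neq0 : n%:R != 0 :> R by rewrite pnatr_eq0 -lt0n.
have -> : \sum_(a < n) n%:R * y a / n%:R * u (blk1 p m a) = \sum_(a < n) y a * u (blk1 p m a).
  by apply: eq_bigr => a _; field.
by rewrite sumrB /phisum -mulr_sumr; ring.
Qed.
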